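(* Let $n \ge 1$ and $d \ge 1$, and let $\Omega_1, \dots, \Omega_n \subseteq \mathbb{R}^d$ be nonempty, compact, convex sets. Let $r^*$ be the smallest radius of a closed Euclidean ball intersecting every $\Omega_i$, i.e. $r^* = \min_{\mathbf{x} \in \mathbb{R}^d} \max_{i \in [n]} \operatorname{dist}(\mathbf{x}, \Omega_i)$. Consider the zero-sum game \[ \min_{(\mathbf{x}, \mathbf{v}_1, \dots, \mathbf{v}_n) \in \mathcal{X} \times \mathcal{V}} \ \max_{\mathbf{y} \in \mathcal{Y}} \ f\big((\mathbf{x}, \mathbf{v}_1,\dots,\mathbf{v}_n), \mathbf{y}\big), \qquad f\big((\mathbf{x}, \mathbf{v}_1,\dots,\mathbf{v}_n), \mathbf{y}\big) := \sum_{i=1}^n \begin{pmatrix} \mathbf{x} - \mathbf{v}_i \\ 0 \end{pmatrix}^{\!\top} \begin{pmatrix} \mathbf{y}_i \\ s_i \end{pmatrix} = \sum_{i=1}^n (\mathbf{x} - \mathbf{v}_i)^\top \mathbf{y}_i, \] where $\mathbf{y} = ((\mathbf{y}_1, s_1), \dots, (\mathbf{y}_n, s_n))$. Then a Nash equilibrium $(\mathbf{x}^*, \mathbf{v}_1^*, \dots, \mathbf{v}_n^*, \mathbf{y}^* )$ of this game exists, and the value of the game is $r^*$. Moreover, for such a Nash equilibrium, the closed ball $B(\mathbf{x}^*, r^* )$ intersects every $\Omega_i$, and $\mathbf{v}_i^* \in B(\mathbf{x}^*, r^* ) \cap \Omega_i$ for every $i \in [n]$.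
   Context: $\|\cdot\|$ is the Euclidean norm, $B(\mathbf{x}, r)$ is the closed Euclidean ball of center $\mathbf{x}$ and radius $r$, and $[n] = \{1,\dots,n\}$. $\mathcal{X}$ is the convex hull of $\Omega_1 \cup \dots \cup \Omega_n$; $\mathcal{V} := \Omega_1 \times \dots \times \Omega_n$; and \[ \mathcal{Y} := \Big\{ ((\mathbf{y}_1, s_1), \dots, (\mathbf{y}_n, s_n)) \in (\mathbb{R}^{d} \times \mathbb{R})^n : \|\mathbf{y}_i\| \le s_i \ \forall i \in [n], \ \sum_{i=1}^n s_i = 1 \Big\}. \] For a zero-sum game $\min_{\mathbf{p} \in \mathcal{P}} \max_{\mathbf{q} \in \mathcal{Q}} f(\mathbf{p}, \mathbf{q})$, a pair $(\mathbf{p}^*, \mathbf{q}^* ) \in \mathcal{P}\times\mathcal{Q}$ is a Nash equilibrium iff $f(\mathbf{p}^*, \mathbf{q}^* ) \le f(\mathbf{p}, \mathbf{q}^* )$ for all $\mathbf{p} \in \mathcal{P}$ and $f(\mathbf{p}^*, \mathbf{q}^* ) \ge f(\mathbf{p}^*, \mathbf{q})$ for all $\mathbf{q} \in \mathcal{Q}$; the value of the game is then $f(\mathbf{p}^*, \mathbf{q}^* )$. *)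

From HB Require Import structures.
From mathcomp Require Import all_boot all_order all_algebra.
From mathcomp Require Import all_classical all_reals all_analysis.
Set Implicit Arguments. Unset Strict Implicit. Unset Printing Implicit Defensive.
Import Order.TTheory GRing.Theory Num.Theory.
Import numFieldNormedType.Exports.
Local Open Scope classical_set_scope.
Local Open Scope ring_scope.

Section Defs.
Variables (R : realType) (d : nat).
Notation V := 'rV[R]_d.

Definition dotv (x y : V) : R := \sum_(j < d) x ord0 j * y ord0 j.
Definition enorm (x : V) : R := Num.sqrt (\sum_(j < d) (x ord0 j) ^+ 2).

Definition cball (x : V) (r : R) : set V := [set z | enorm (z - x) <= r].

Definition conv_hull (A : set V) : set V :=
  [set x | forall C : set V, convex.convex_set (C : set (convex_lmodType V)) -> A `<=` C -> C x].

Definition dist (x : V) (A : set V) : R := inf [set enorm (x - v) | v in A].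
End Defs.

Definition rstar (R : realType) (d n : nat) (Omega : 'I_n -> set 'rV[R]_d) : R :=
  inf [set \big[Num.max/0]_(i < n) dist x (Omega i) | x in [set: 'rV[R]_d]].

Definition gameX (R : realType) (d n : nat) (Omega : 'I_n -> set 'rV[R]_d) :=
  conv_hull (\bigcup_(i in [set: 'I_n]) Omega i).
Definition gameV (R : realType) (d n : nat) (Omega : 'I_n -> set 'rV[R]_d)
  : set ('I_n -> 'rV[R]_d) := [set v | forall i, Omega i (v i)].
Definition gameY (R : realType) (d n : nat)
  : set (('I_n -> 'rV[R]_d) * ('I_n -> R)) :=
  [set ys | (forall i, enorm (ys.1 i) <= ys.2 i) /\ \sum_(i < n) ys.2 i = 1].

(* minimizing player: p = (x, (v_1..v_n)); maximizing player q = ((y_i), (s_i)) *)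
Definition payoff (R : realType) (d n : nat)
  (p : 'rV[R]_d * ('I_n -> 'rV[R]_d)) (q : ('I_n -> 'rV[R]_d) * ('I_n -> R)) : R :=
  \sum_(i < n) dotv (p.1 - p.2 i) (q.1 i).

Definition nash_eq (R : realType) (P Q : Type) (SP : set P) (SQ : set Q)
  (f : P -> Q -> R) (p : P) (q : Q) : Prop :=
  [/\ SP p, SQ q, (forall p', SP p' -> f p q <= f p' q)
    & (forall q', SQ q' -> f p q' <= f p q)].

(* A point [c] minimizing [x |-> max_i dist(x, Omega_i)] exists by coercivity; let
   [v_i] be the projection of [c] onto [Omega_i] and [u_i := c - v_i]. Since no
   translation decreases [max_i |u_i|], [0] lies in the convex hull of the active
   [u_i] (those with [|u_i| = r*]): otherwise the least-norm point of that hull is a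
   common descent direction. The convex weights [lam_i] give the maximizer's strategy
   [y_i = (lam_i / r* ) u_i], [s_i = lam_i], and [((c, v), y)] is a saddle point of
   value [r*]: [sum_i y_i = 0] makes the payoff independent of [x], the projection
   inequality makes each [v_i] a best response, and Cauchy-Schwarz bounds every reply
   of the maximizer by [max_i |x - v_i|]. All equilibria of a zero-sum game share
   their value, and the maximizer may put all its weight on a single [i]; hence
   every equilibrium [(x, v)] has [|x - v_i| <= r*]. *)

From HB Require Import structures.
From mathcomp Require Import all_boot all_order all_algebra.
From mathcomp Require Import all_classical all_reals all_analysis.
From mathcomp Require Import ring lra.
Import Order.TTheory GRing.Theory Num.Theory.
Import numFieldNormedType.Exports.
Local Open Scope classical_set_scope.
Local Open Scope ring_scope.
Set Implicit Arguments. Unset Strict Implicit. Unset Printing Implicit Defensive.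

Section Euclidean.
Variables (R : realType) (d : nat).
Implicit Types (x y z : 'rV[R]_d) (c : R).

Lemma dotvC x y : dotv x y = dotv y x.
Proof. by apply: eq_bigr => j _; rewrite mulrC. Qed.

Lemma dotvDl x y z : dotv (x + y) z = dotv x z + dotv y z.
Proof. by rewrite /dotv -big_split; apply: eq_bigr => j _; rewrite mxE mulrDl. Qed.

Lemma dotvNl x z : dotv (- x) z = - dotv x z.
Proof. by rewrite /dotv -sumrN; apply: eq_bigr => j _; rewrite mxE mulNr. Qed.

Lemma dotvBl x y z : dotv (x - y) z = dotv x z - dotv y z.
Proof. by rewrite dotvDl dotvNl. Qed.

Lemma dotvZl c x z : dotv (c *: x) z = c * dotv x z.
Proof. by rewrite /dotv mulr_sumr; apply: eq_bigr => j _; rewrite mxE mulrA. Qed.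

Lemma dotvDr x y z : dotv z (x + y) = dotv z x + dotv z y.
Proof. by rewrite !(dotvC z) dotvDl. Qed.

Lemma dotvBr x y z : dotv z (x - y) = dotv z x - dotv z y.
Proof. by rewrite !(dotvC z) dotvBl. Qed.

Lemma dotvZr c x z : dotv z (c *: x) = c * dotv z x.
Proof. by rewrite !(dotvC z) dotvZl. Qed.

Lemma dotv0l z : dotv 0 z = 0.
Proof. by rewrite -(scale0r 0) dotvZl mul0r. Qed.

Lemma dotv0r z : dotv z 0 = 0.
Proof. by rewrite dotvC dotv0l. Qed.

Lemma dotv_sumr (I : finType) (F : I -> 'rV[R]_d) z :
  dotv z (\sum_i F i) = \sum_i dotv z (F i).
Proof.
rewrite /dotv exchange_big /=; apply: eq_bigr => j _.
by rewrite summxE mulr_sumr.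
Qed.

Lemma dotvv_ge0 x : 0 <= dotv x x.
Proof. by apply: sumr_ge0 => j _; rewrite -expr2 sqr_ge0. Qed.

Lemma dotvv_eq0 x : dotv x x = 0 -> x = 0.
Proof.
move=> /eqP; rewrite psumr_eq0 => [/allP x0|j _]; last by rewrite -expr2 sqr_ge0.
apply/rowP => j; rewrite mxE.
by have /implyP/(_ isT) := x0 j (mem_index_enum j); rewrite mulf_eq0 orbb => /eqP.
Qed.

Lemma enorm_ge0 x : 0 <= enorm x.
Proof. exact: sqrtr_ge0. Qed.

Lemma enorm_sqr x : enorm x ^+ 2 = dotv x x.
Proof.
rewrite /enorm sqr_sqrtr; last by apply: sumr_ge0 => j _; rewrite sqr_ge0.
by apply: eq_bigr => j _; rewrite expr2.
Qed.

Lemma enormE x : enorm x = Num.sqrt (dotv x x).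
Proof. by rewrite -enorm_sqr sqrtr_sqr ger0_norm ?enorm_ge0. Qed.

Lemma enorm0 : enorm (0 : 'rV[R]_d) = 0.
Proof. by rewrite enormE dotv0l sqrtr0. Qed.

Lemma enorm_eq0 x : enorm x = 0 -> x = 0.
Proof. by move=> x0; apply: dotvv_eq0; rewrite -enorm_sqr x0 expr0n. Qed.

Lemma enormZ c x : enorm (c *: x) = `|c| * enorm x.
Proof.
by rewrite !enormE dotvZl dotvZr mulrA -expr2 sqrtrM ?sqr_ge0 // sqrtr_sqr.
Qed.

Lemma enormN x : enorm (- x) = enorm x.
Proof. by rewrite -scaleN1r enormZ normrN normr1 mul1r. Qed.

Lemma enormB x y : enorm (x - y) = enorm (y - x).
Proof. by rewrite -enormN opprB. Qed.

Lemma enormDZ_sqr x y c :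
  enorm (x + c *: y) ^+ 2 = enorm x ^+ 2 + 2 * c * dotv x y + c ^+ 2 * enorm y ^+ 2.
Proof. by rewrite !enorm_sqr dotvDl !dotvDr !dotvZl !dotvZr (dotvC y x); ring. Qed.

(* Expanding [|b x - a y|^2 >= 0] with [a = |x|], [b = |y|]. *)
Lemma dotv_le x y : dotv x y <= enorm x * enorm y.
Proof.
have [/enorm_eq0 ->|x0] := eqVneq (enorm x) 0; first by rewrite dotv0l enorm0 mul0r.
have [/enorm_eq0 ->|y0] := eqVneq (enorm y) 0; first by rewrite dotv0r enorm0 mulr0.
have ab : 0 < enorm x * enorm y by rewrite mulr_gt0 // lt_def ?x0 ?y0 enorm_ge0.
have := sqr_ge0 (enorm (enorm y *: x - enorm x *: y)).
rewrite -scaleNr enormDZ_sqr !enormZ dotvZl.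
rewrite !ger0_norm ?normrN ?enorm_ge0 // => h; nra.
Qed.

Lemma enormD x y : enorm (x + y) <= enorm x + enorm y.
Proof.
rewrite -(@ler_pXn2r _ 2) // ?nnegrE ?addr_ge0 ?enorm_ge0 //.
have := enormDZ_sqr x y 1; rewrite scale1r => ->.
by have := dotv_le x y; lra.
Qed.

Lemma enorm_sum (I : finType) (F : I -> 'rV[R]_d) :
  enorm (\sum_i F i) <= \sum_i enorm (F i).
Proof.
elim/big_rec2: _ => [|i a b _ ih]; first by rewrite enorm0.
by apply: le_trans (enormD _ _) _; rewrite lerD2l.
Qed.

Lemma enorm_coord x j : `|x ord0 j| <= enorm x.
Proof.
rewrite -(@ler_pXn2r _ 2) // ?nnegrE ?enorm_ge0 //.
rewrite enorm_sqr real_normK ?num_real // /dotv (bigD1 j) //= -expr2 lerDl.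
by apply: sumr_ge0 => i _; rewrite -expr2 sqr_ge0.
Qed.

Lemma enorm_le_norm x : enorm x <= d%:R * `|x|.
Proof.
have coord_le j : `|x ord0 j| <= `|x| by rewrite [`|x|]mx_normrE (le_bigmax _ _ (ord0, j)).
apply: (@le_trans _ _ (\sum_j `|x ord0 j|)); last first.
  by rewrite mulr_natl -[X in _ *+ X]card_ord -sumr_const; apply: ler_sum.
rewrite -(@ler_pXn2r _ 2) // ?nnegrE ?enorm_ge0 ?sumr_ge0 //.
rewrite enorm_sqr /dotv expr2 mulr_suml; apply: ler_sum => i _.
rewrite mulr_sumr (bigD1 i) //= -normrM -[X in X <= _]addr0 lerD ?ler_norm //.
by apply: sumr_ge0 => k _; rewrite mulr_ge0.
Qed.

End Euclidean.

Section Minimizers.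
Variable R : realType.

Lemma lipschitz_continuous (V W : normedModType R) (f : V -> W) (k : R) :
  (forall x y, `|f x - f y| <= k * `|x - y|) -> continuous f.
Proof.
move=> fk x; apply/cvgrPdist_lt => e e0.
have k1 : 0 < `|k| + 1 by rewrite ltr_wpDl.
have del0 : 0 < e / (`|k| + 1) by rewrite divr_gt0.
near=> y.
have : `|x - y| < e / (`|k| + 1).
  by near: y; exact: (@cvgr_dist_lt _ _ _ (nbhs x) _ id x (@cvg_id _ _) _ del0).
rewrite ltr_pdivlMr // => xy.
apply: le_lt_trans (fk x y) _; apply: le_lt_trans xy.
rewrite mulrC ler_wpM2l // (le_trans (ler_norm k)) //.
by rewrite lerDl.
Unshelve. all: by end_near.
Qed.

Lemma enorm_lipschitz_continuous m (f : 'rV[R]_m -> R) (k : R) :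
  (forall x y, f x <= f y + k * enorm (x - y)) -> continuous f.
Proof.
move=> fk; apply: (@lipschitz_continuous _ _ f (`|k| * m%:R)) => x y.
rewrite -mulrA; apply: le_trans (ler_wpM2l (normr_ge0 k) (enorm_le_norm _)).
have kk (z : 'rV[R]_m) : k * enorm z <= `|k| * enorm z by rewrite ler_wpM2r ?enorm_ge0 ?ler_norm.
have := fk x y; have := fk y x; have := kk (x - y); rewrite enormB.
by move=> *; rewrite ler_norml; apply/andP; split; lra.
Qed.

Lemma continuous_argmin_rV m (K : set 'rV[R]_m) (f : 'rV[R]_m -> R) :
  K !=set0 -> compact K -> continuous f ->
  exists2 c, K c & forall x, K x -> f c <= f x.
Proof.
move=> K0 cK cf.
have [c Kc cmin] := EVT_min_rV K0 cK (continuous_subspaceT cf).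
by exists c => [|x Kx]; [rewrite inE in Kc | apply: cmin; rewrite inE].
Qed.

(* Minimize over the box [-B, B]^m, outside which f exceeds f 0 + 1. *)
Lemma coercive_argmin_rV m (f : 'rV[R]_m -> R) (M : R) :
  continuous f -> (forall x, enorm x - M <= f x) -> exists c, forall x, f c <= f x.
Proof.
move=> cf fM; pose B := M + f 0 + 1.
have B1 : 1 <= B by have := fM 0; rewrite enorm0 /B; lra.
pose K := [set x : 'rV[R]_m | forall j, `[- B, B]%classic (x ord0 j)].
have cK : compact K.
  by apply: (rV_compact (A := fun=> `[- B, B]%classic)) => j; exact: segment_compact.
have K0 : K 0 by move=> j /=; rewrite mxE in_itv /=; apply/andP; split; lra.
have [c Kc cmin] := continuous_argmin_rV (ex_intro _ 0 K0) cK cf.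
exists c => x; have [/cmin //|Kx] := pselect (K x).
have [j] : exists j, ~ `[- B, B]%classic (x ord0 j) by apply/existsNP.
move=> /negP; rewrite /= in_itv /= -ler_norml -ltNge /B => Bx.
by have := enorm_coord x j; have := fM x; have := cmin 0 K0; lra.
Qed.

End Minimizers.

Section Distance.
Variables (R : realType) (d : nat).
Implicit Types (x y v w : 'rV[R]_d) (A : set 'rV[R]_d).

Lemma enorm_lipschitz x y : enorm x <= enorm y + enorm (x - y).
Proof. by have := enormD y (x - y); rewrite addrC subrK. Qed.

Lemma dist_le x A v : A v -> dist x A <= enorm (x - v).
Proof.
by move=> Av; apply: ge_inf; [exists 0 => _ [w _ <-]; exact: enorm_ge0 | exists v].
Qed.

Lemma le_dist x A r :
  A !=set0 -> (forall v, A v -> r <= enorm (x - v)) -> r <= dist x A.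
Proof.
move=> [v Av] rA; apply: lb_le_inf; first by exists (enorm (x - v)), v.
by move=> _ [w Aw <-]; exact: rA.
Qed.

Lemma dist_lipschitz x y A : A !=set0 -> dist x A <= dist y A + enorm (x - y).
Proof.
move=> A0; rewrite -lerBlDr; apply: le_dist => // v Av.
rewrite lerBlDr (le_trans (dist_le x Av)) //.
by have := enorm_lipschitz (x - v) (y - v); rewrite opprB addrA subrK.
Qed.

Lemma exists_nearest x A : A !=set0 -> compact A ->
  exists2 v, A v & forall w, A w -> enorm (x - v) <= enorm (x - w).
Proof.
move=> A0 cA; apply: continuous_argmin_rV => //.
apply: (@enorm_lipschitz_continuous _ _ _ 1) => v w.
rewrite mul1r [enorm (v - w)]enormB.
have -> : w - v = (x - v) - (x - w) by rewrite opprB [RHS]addrC addrA subrK.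
exact: enorm_lipschitz.
Qed.

Lemma dist_nearest x A v : A v ->
  (forall w, A w -> enorm (x - v) <= enorm (x - w)) -> dist x A = enorm (x - v).
Proof. by move=> Av vmin; apply/eqP; rewrite eq_le dist_le //= le_dist //; exists v. Qed.

(* If [a := (x - v).(w - v) > 0], the point at parameter [t := a / (a + |w - v|^2)]
   of the segment [v, w] is strictly closer to [x] than [v]. *)
Lemma nearest_dotv_le0 x v w :
  (forall t, 0 < t -> t <= 1 -> enorm (x - v) <= enorm (x - (v + t *: (w - v)))) ->
  dotv (x - v) (w - v) <= 0.
Proof.
move=> vmin; set a := dotv (x - v) (w - v); rewrite leNgt; apply/negP => a0.
set b := enorm (w - v) ^+ 2.
have b0 : 0 <= b by exact: sqr_ge0.
pose t := a / (a + b).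
have ab0 : 0 < a + b by rewrite ltr_wpDr.
have t0 : 0 < t by rewrite divr_gt0.
have tab : t * (a + b) = a by rewrite divfK ?gt_eqF.
have t1 : t <= 1 by rewrite /t ler_pdivrMr // mul1r lerDl.
have := vmin t t0 t1.
rewrite opprD addrA -scaleNr -(@ler_pXn2r _ 2) ?nnegrE ?enorm_ge0 //.
rewrite enormDZ_sqr -/a -/b sqrrN.
have : 0 < t * a by rewrite mulr_gt0.
nra.
Qed.

Lemma convex_nearest_dotv_le0 A x v w :
  convex.convex_set (A : set (convex_lmodType 'rV[R]_d)) -> A v -> A w ->
  (forall w', A w' -> enorm (x - v) <= enorm (x - w')) ->
  dotv (x - v) (w - v) <= 0.
Proof.
move=> cA Av Aw vmin; apply: nearest_dotv_le0 => t t0 t1; apply: vmin.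
rewrite scalerBr addrCA -[v in v - _]scale1r -scalerBl.
by have := cA w v (Itv01 (ltW t0) t1) (mem_set Aw) (mem_set Av); rewrite inE.
Qed.

Lemma compact_enorm_bounded A : compact A -> exists M, forall v, A v -> enorm v <= M.
Proof.
move=> /compact_bounded [M [_ AM]]; exists (d%:R * (M + 1)) => v Av.
apply: le_trans (enorm_le_norm v) _; rewrite ler_wpM2l //.
by apply: AM Av; rewrite ltrDl.
Qed.

End Distance.

Lemma inf_image_argmin (R : realType) (T : Type) (f : T -> R) (c : T) :
  (forall x, f c <= f x) -> inf [set f x | x in [set: T]] = f c.
Proof.
move=> cmin; apply/eqP; rewrite eq_le; apply/andP; split.
  by apply: ge_inf; [exists (f c) => _ [x _ <-] | exists c].
by apply: lb_le_inf; [exists (f c), c | move=> _ [x _ <-]].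
Qed.

Section MinimaxCenter.
Variables (R : realType) (d n : nat) (Omega : 'I_n -> set 'rV[R]_d).
Hypotheses (n_gt0 : (0 < n)%N) (Omega0 : forall i, Omega i !=set0)
  (compact_Omega : forall i, compact (Omega i)).

Definition max_dist (x : 'rV[R]_d) : R := \big[Num.max/0]_(i < n) dist x (Omega i).

Lemma max_dist_lipschitz x y : max_dist x <= max_dist y + enorm (x - y).
Proof.
apply: bigmax_le => [|i _]; first by rewrite addr_ge0 ?bigmax_ge_id ?enorm_ge0.
by apply: le_trans (dist_lipschitz x y (Omega0 i)) _; rewrite lerD2r le_bigmax.
Qed.

(* Coercivity: [max_dist x >= dist x (Omega i0) >= |x| - M] if [Omega i0] lies in [B(0, M)]. *)
Lemma rstar_attained :
  exists c, rstar Omega = max_dist c /\ forall x, max_dist c <= max_dist x.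
Proof.
pose i0 := Ordinal n_gt0.
have [M OmegaM] := compact_enorm_bounded (@compact_Omega i0).
have max_dist_cont : continuous max_dist.
  by apply: (@enorm_lipschitz_continuous _ _ _ 1) => x y; rewrite mul1r max_dist_lipschitz.
have max_dist_coercive x : enorm x - M <= max_dist x.
  apply: le_trans (le_bigmax _ _ i0); apply: le_dist => // v /OmegaM vM.
  by have := enorm_lipschitz x v; lra.
have [c cmin] := coercive_argmin_rV max_dist_cont max_dist_coercive.
by exists c; split => //; rewrite /rstar (inf_image_argmin cmin).
Qed.

End MinimaxCenter.

Lemma convex_set_sum (R : realType) (V : lmodType R) (C : set (convex_lmodType V)) :
  convex.convex_set C ->
  forall n (lam : 'I_n -> R) (p : 'I_n -> V),
  (forall i, 0 <= lam i) -> \sum_i lam i = 1 -> (forall i, C (p i)) ->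
  C (\sum_i lam i *: p i).
Proof.
move=> cC; elim=> [|n IH] lam p lam0 lam1 pC.
  by move: lam1; rewrite big_ord0 => /eqP; rewrite eq_sym oner_eq0.
rewrite big_ord_recl; move: lam1; rewrite big_ord_recl.
set s := \sum_(i < n) lam (lift ord0 i) => lam1.
have s0 : 0 <= s by apply: sumr_ge0.
have [s_eq0|s_neq0] := eqVneq s 0.
  move/eqP: (s_eq0); rewrite psumr_eq0 // => /allP tail0.
  rewrite big1 => [|i _]; last first.
    by have /implyP/(_ isT)/eqP -> := tail0 i (mem_index_enum i); rewrite scale0r.
  have -> : lam ord0 = 1 by rewrite -lam1 s_eq0 addr0.
  by rewrite addr0 scale1r.
set q := \sum_(i < n) lam (lift ord0 i) *: p (lift ord0 i).
have Cq : C (\sum_(i < n) (lam (lift ord0 i) / s) *: p (lift ord0 i)).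
  apply: IH => // [i|]; first by rewrite divr_ge0.
  by rewrite -mulr_suml mulfV.
have q_eq : q = s *: \sum_(i < n) (lam (lift ord0 i) / s) *: p (lift ord0 i).
  by rewrite scaler_sumr; apply: eq_bigr => i _; rewrite scalerA mulrCA mulfV ?mulr1.
have lam_le1 : lam ord0 <= 1 by rewrite -lam1 lerDl.
have := cC _ _ (Itv01 (lam0 ord0) lam_le1) (mem_set (pC ord0)) (mem_set Cq).
have s_eq : s = 1 - lam ord0 by rewrite -lam1 addrC addKr.
by rewrite inE q_eq s_eq.
Qed.

Section SimplexOn.
Variables (R : realType) (n : nat) (P : pred 'I_n).

Definition simplex_on : set 'rV[R]_n :=
  [set l | forall i, `[0, (P i)%:R]%classic (l ord0 i)] `&` [set l | \sum_i l ord0 i = 1].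

Lemma simplex_on_compact : compact simplex_on.
Proof.
have box : compact [set l : 'rV[R]_n | forall i, `[0, (P i)%:R]%classic (l ord0 i)].
  by apply: (rV_compact (A := fun i => `[0, (P i)%:R : R]%classic)) => i; exact: segment_compact.
apply: compact_closedI box _.
apply: (@preimage_closed _ _ (fun l : 'rV[R]_n => \sum_i l ord0 i) [set 1]);
  last exact: closed_eq.
move=> l _; apply: (@enorm_lipschitz_continuous _ _ _ n%:R) => x y.
rewrite -lerBlDl -sumrB mulr_natl -[X in _ *+ X]card_ord -sumr_const.
apply: ler_sum => i _; apply: le_trans (ler_norm _) _.
by have := enorm_coord (x - y) i; rewrite !mxE.
Qed.

Lemma simplex_on_delta j : P j -> simplex_on (\row_i (i == j)%:R).
Proof.
move=> Pj; split => [i|] /=; rewrite ?mxE ?in_itv /=.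
  by case: eqP => [->|_]; rewrite ?Pj ?lexx ?ler01 ?ler0n.
under eq_bigr do rewrite mxE.
by rewrite (bigD1 j) //= eqxx big1 ?addr0 // => i /negbTE ->.
Qed.

Lemma simplex_on_conv l l' t : simplex_on l -> simplex_on l' -> 0 <= t <= 1 ->
  simplex_on ((1 - t) *: l + t *: l').
Proof.
move=> [lP l1] [l'P l'1] /andP[t0 t1]; split => [i|] /=.
  have := lP i; have := l'P i; rewrite /= !mxE !in_itv /=.
  by move=> /andP[? ?] /andP[? ?]; apply/andP; split; nra.
under eq_bigr do rewrite !mxE.
by rewrite big_split /= -!mulr_sumr l1 l'1 !mulr1 subrK.
Qed.

End SimplexOn.
Arguments simplex_on_compact {R n} P.
Arguments simplex_on_delta {R n P j}.

Section Multipliers.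
Variables (R : realType) (d n : nat) (u : 'I_n -> 'rV[R]_d).

(* The point [z] of least norm in the convex hull of the [u j] with [P j]:
   by the variational inequality at [z] (nearest point to [0]), [z.z <= z.u j]. *)
Lemma min_norm_hull (P : pred 'I_n) : (exists j, P j) ->
  exists2 lam : 'rV[R]_n, simplex_on P lam &
    let z := \sum_i lam ord0 i *: u i in forall j, P j -> dotv z z <= dotv z (u j).
Proof.
move=> [j0 Pj0]; pose psi (l : 'rV[R]_n) := enorm (\sum_i l ord0 i *: u i).
have psi_cont : continuous psi.
  apply: (@enorm_lipschitz_continuous _ _ _ (\sum_i enorm (u i))) => x y; rewrite /psi.
  have -> : \sum_i x ord0 i *: u i =
            \sum_i y ord0 i *: u i + \sum_i (x - y) ord0 i *: u i.
    by rewrite -big_split /=; apply: eq_bigr => i _; rewrite !mxE scalerBl addrCA subrr addr0.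
  apply: le_trans (enormD _ _) _; rewrite lerD2l mulr_suml.
  apply: le_trans (enorm_sum _) _; apply: ler_sum => i _.
  by rewrite enormZ mulrC ler_wpM2l ?enorm_ge0 ?enorm_coord.
have [lam lamS lam_min] :=
  continuous_argmin_rV (ex_intro _ _ (simplex_on_delta Pj0)) (simplex_on_compact P) psi_cont.
exists lam => // z j Pj.
suff : dotv (0 - z) (u j - z) <= 0 by rewrite sub0r dotvNl dotvBr; lra.
apply: nearest_dotv_le0 => t t0 t1; rewrite !sub0r !enormN.
have t01 : 0 <= t <= 1 by rewrite ltW.
have -> : z + t *: (u j - z) = (1 - t) *: z + t *: u j.
  by rewrite scalerBr scalerBl scale1r addrCA addrC.
have psi_conv : psi ((1 - t) *: lam + t *: \row_k (k == j)%:R) = enorm ((1 - t) *: z + t *: u j).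
  rewrite /psi (eq_bigr (fun i => (1 - t) *: (lam ord0 i *: u i) + t *: ((i == j)%:R *: u i)));
    last by move=> i _; rewrite !mxE !scalerA -scalerDl.
  have delta_sum : \sum_i (i == j)%:R *: u i = u j.
    by rewrite (bigD1 j) //= eqxx scale1r big1 ?addr0 // => i /negbTE ->; rewrite scale0r.
  by rewrite big_split /= -!scaler_sumr delta_sum.
by rewrite -psi_conv; apply: lam_min; exact: simplex_on_conv lamS (simplex_on_delta Pj) t01.
Qed.

(* Move the centre by [t z]: active points get closer since [z.u i >= z.z > 0],
   inactive ones stay inside the ball when [t] is small. *)
Lemma max_enorm_descent (z : 'rV[R]_d) : (0 < n)%N -> 0 < dotv z z ->
  (forall i, enorm (u i) = \big[Num.max/0]_k enorm (u k) -> dotv z z <= dotv z (u i)) ->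
  exists t, \big[Num.max/0]_i enorm (u i - t *: z) < \big[Num.max/0]_i enorm (u i).
Proof.
move=> n_gt0 z0 zu; set r := \big[Num.max/0]_k enorm (u k) in zu *.
have ur i : enorm (u i) <= r by exact: le_bigmax.
have r0 : 0 < r.
  rewrite lt_def bigmax_ge_id andbT; apply/eqP => r_eq0.
  pose i0 := Ordinal n_gt0.
  have u0 : u i0 = 0 by apply: enorm_eq0; apply/le_anti; rewrite enorm_ge0 -r_eq0 ur.
  by have := zu i0; rewrite u0 enorm0 r_eq0 dotv0r => /(_ erefl); lra.
pose gap i := if enorm (u i) == r then 1 else (r - enorm (u i)) / (enorm z + 1).
pose t := \big[Num.min/1]_i gap i.
have t0 : 0 < t.
  apply: lt_bigmin => // i _; rewrite /gap; case: eqP => // /eqP ui_ne.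
  apply: divr_gt0; last by rewrite ltr_wpDl ?enorm_ge0.
  by rewrite subr_gt0 lt_neqAle ui_ne ur.
have t1 : t <= 1 by exact: bigmin_le_id.
exists t; apply: bigmax_lt => // i _.
have : t <= gap i by exact: bigmin_le.
rewrite /gap; case: eqP => [ui_eq _|_].
  rewrite -(@ltr_pXn2r _ 2) ?nnegrE ?enorm_ge0 ?ltW // -scaleNr enormDZ_sqr.
  rewrite ui_eq sqrrN enorm_sqr (dotvC (u i)).
  have := zu i ui_eq; have : 0 < t * dotv z z by rewrite mulr_gt0.
  by move: t t0 t1 => t t0 t1 *; nra.
move=> tgap; have : t * (enorm z + 1) <= r - enorm (u i).
  by rewrite -ler_pdivlMr ?ltr_wpDl ?enorm_ge0.
rewrite mulrDr mulr1 => {}tgap.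
apply: le_lt_trans (enormD _ _) _; rewrite -scaleNr enormZ normrN ger0_norm ?ltW //.
lra.
Qed.

Lemma minmax_multipliers : (0 < n)%N ->
  (forall t, \big[Num.max/0]_i enorm (u i) <= \big[Num.max/0]_i enorm (u i - t)) ->
  exists lam : 'I_n -> R, [/\ forall i, 0 <= lam i, \sum_i lam i = 1,
    forall i, lam i != 0 -> enorm (u i) = \big[Num.max/0]_k enorm (u k)
    & \sum_i lam i *: u i = 0].
Proof.
move=> n_gt0 umin; set r := \big[Num.max/0]_k enorm (u k) in umin *.
pose active i := enorm (u i) == r.
have [j0 _ rj0] := eq_bigmax (x := 0) (Ordinal n_gt0) xpredT (fun i => enorm (u i)) isT
  (fun i _ => enorm_ge0 (u i)).
have [lam [lam_box lam1] lam_foc] := @min_norm_hull active (ex_intro _ j0 (introT eqP (esym rj0))).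
have lam_itv i : 0 <= lam ord0 i <= (active i)%:R by have := lam_box i; rewrite /= in_itv.
exists (fun i => lam ord0 i); split => //.
- by move=> i; have /andP[] := lam_itv i.
- move=> i; have := lam_itv i; rewrite /active; case: eqP => // _ lam_eq0 /negP[].
  by apply/eqP/le_anti; rewrite andbC.
- apply: dotvv_eq0; apply/le_anti; rewrite dotvv_ge0 andbT leNgt; apply/negP => z0.
  have [t] := max_enorm_descent n_gt0 z0 (fun i ui => lam_foc i (introT eqP ui)).
  by rewrite ltNge umin.
Qed.

End Multipliers.

Lemma nash_eq_value (R : realType) (P Q : Type) (SP : set P) (SQ : set Q)
    (f : P -> Q -> R) p q p' q' :
  nash_eq SP SQ f p q -> nash_eq SP SQ f p' q' -> f p q = f p' q'.
Proof.
case=> Pp Qq pmin qmax [Pp' Qq' pmin' qmax']; apply/le_anti/andP; split.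
  exact: le_trans (pmin _ Pp') (qmax' _ Qq).
exact: le_trans (pmin' _ Pp) (qmax _ Qq').
Qed.

Section Payoff.
Variables (R : realType) (d n : nat).
Implicit Types (x : 'rV[R]_d) (v : 'I_n -> 'rV[R]_d).

Lemma payoff_le_max x v q :
  gameY q -> payoff (x, v) q <= \big[Num.max/0]_i enorm (x - v i).
Proof.
case: q => y s [/= ys s1]; rewrite /payoff /=.
apply: le_trans (_ : \sum_i \big[Num.max/0]_k enorm (x - v k) * s i <= _).
  apply: ler_sum => i _; apply: le_trans (dotv_le _ _) _.
  by apply: ler_pM; rewrite ?enorm_ge0 ?ys ?le_bigmax.
by rewrite -mulr_sumr s1 mulr1.
Qed.

Lemma payoff_point_mass x v i :
  exists2 q, gameY q & payoff (x, v) q = enorm (x - v i).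
Proof.
set w := x - v i; set e := enorm w.
have e0 : 0 <= e by exact: enorm_ge0.
exists (fun j => if j == i then e^-1 *: w else 0, fun j => (j == i)%:R); first split.
- move=> j /=; case: eqP => _; last by rewrite enorm0.
  rewrite enormZ ger0_norm ?invr_ge0 // -/e.
  by have [->|e_neq0] := eqVneq e 0; [rewrite mulr0 | rewrite mulVf].
- by rewrite /= (bigD1 i) //= eqxx big1 ?addr0 // => j /negbTE ->.
rewrite /payoff (bigD1 i) //= eqxx big1 ?addr0 => [|j /negbTE ->]; last exact: dotv0r.
rewrite dotvZr -/w -enorm_sqr -/e.
by have [->|e_neq0] := eqVneq e 0; [rewrite invr0 mul0r | rewrite expr2 mulKf].
Qed.

End Payoff.

Section SaddlePoint.
Variables (R : realType) (d n : nat) (Omega : 'I_n -> set 'rV[R]_d).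
Variables (c : 'rV[R]_d) (v : 'I_n -> 'rV[R]_d) (lam : 'I_n -> R).
Let r := \big[Num.max/0]_k enorm (c - v k).
Hypotheses (Omega_convex : forall i,
    convex.convex_set (Omega i : set (convex_lmodType 'rV[R]_d)))
  (v_in : forall i, Omega i (v i))
  (v_nearest : forall i w, Omega i w -> enorm (c - v i) <= enorm (c - w))
  (lam_ge0 : forall i, 0 <= lam i) (lam_sum1 : \sum_i lam i = 1)
  (lam_active : forall i, lam i != 0 -> enorm (c - v i) = r)
  (lam_balanced : \sum_i lam i *: (c - v i) = 0).

Let q := (fun i => (lam i / r) *: (c - v i), lam).

Lemma center_in_gameX : gameX Omega c.
Proof.
have sum_eq : \sum_i lam i *: (c - v i) = c - \sum_i lam i *: v i.
  by rewrite (eq_bigr _ (fun i _ => scalerBr _ _ _)) sumrB -scaler_suml lam_sum1 scale1r.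
have -> : c = \sum_i lam i *: v i by apply/eqP; rewrite -subr_eq0 -sum_eq lam_balanced.
move=> C C_convex OmegaC; apply: convex_set_sum => // i.
by apply: OmegaC; exists i.
Qed.

Lemma multiplier_in_gameY : gameY q.
Proof.
split=> [i /=|//]; rewrite enormZ ger0_norm ?divr_ge0 ?bigmax_ge_id //.
have [->|/lam_active ->] := eqVneq (lam i) 0; first by rewrite !mul0r.
have [->|r_neq0] := eqVneq r 0; first by rewrite invr0 !mulr0.
by rewrite divfK.
Qed.

Lemma multiplier_payoff : payoff (c, v) q = r.
Proof.
rewrite /payoff /= -[RHS]mul1r -lam_sum1 mulr_suml; apply: eq_bigr => i _.
rewrite dotvZr -enorm_sqr.
have [->|/lam_active ->] := eqVneq (lam i) 0; first by rewrite !mul0r.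
have [->|r_neq0] := eqVneq r 0; first by rewrite expr2 !mulr0.
by rewrite expr2 mulrA divfK.
Qed.

(* Since [\sum_i y_i = 0] the payoff does not depend on [x], and each [v_i]
   is a best response by the variational inequality for the projection. *)
Lemma multiplier_best_response p :
  (gameX Omega `*` gameV Omega) p -> payoff (c, v) q <= payoff p q.
Proof.
case: p => x' v' [_ v'_in]; rewrite /payoff /= -subr_ge0 -sumrB.
have -> : \sum_i (dotv (x' - v' i) (q.1 i) - dotv (c - v i) (q.1 i)) =
          dotv (x' - c) (\sum_i q.1 i) + \sum_i dotv (v i - v' i) (q.1 i).
  rewrite dotv_sumr -big_split /=; apply: eq_bigr => i _.
  rewrite -dotvBl -dotvDl; congr dotv.
  by rewrite opprB addrACA [RHS]addrACA [- v' i + _]addrC.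
have -> : \sum_i q.1 i = r^-1 *: \sum_i lam i *: (c - v i).
  by rewrite scaler_sumr; apply: eq_bigr => i _; rewrite scalerA mulrC.
rewrite lam_balanced scaler0 dotv0r add0r; apply: sumr_ge0 => i _.
rewrite dotvZr mulr_ge0 ?divr_ge0 ?bigmax_ge_id //.
have := convex_nearest_dotv_le0 (@Omega_convex i) (v_in i) (v'_in i) (@v_nearest i).
by rewrite dotvC -opprB dotvNl oppr_le0.
Qed.

Lemma exists_saddle_of_multipliers :
  exists q, nash_eq (gameX Omega `*` gameV Omega) (@gameY R d n) (@payoff R d n) (c, v) q
            /\ payoff (c, v) q = r.
Proof.
exists q; split; last exact: multiplier_payoff.
split; [by split; [exact: center_in_gameX | exact: v_in] | exact: multiplier_in_gameY
       | exact: multiplier_best_response | ].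
by move=> q' /payoff_le_max; rewrite multiplier_payoff.
Qed.

End SaddlePoint.

Lemma exists_saddle_point (R : realType) (d n : nat) (Omega : 'I_n -> set 'rV[R]_d) :
  (0 < n)%N -> (forall i, Omega i !=set0) -> (forall i, compact (Omega i)) ->
  (forall i, convex.convex_set (Omega i : set (convex_lmodType 'rV[R]_d))) ->
  exists p q, nash_eq (gameX Omega `*` gameV Omega) (@gameY R d n) (@payoff R d n) p q
              /\ payoff p q = rstar Omega.
Proof.
move=> n_gt0 Omega0 Omega_compact Omega_convex.
have [c [rstarE cmin]] := rstar_attained n_gt0 Omega0 Omega_compact.
have /fin_all_exists [v v_nearest] : forall i, exists vi,
    Omega i vi /\ forall w, Omega i w -> enorm (c - vi) <= enorm (c - w).
  by move=> i; have [vi ? ?] := exists_nearest c (Omega0 i) (Omega_compact i); exists vi.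
have max_distE : max_dist Omega c = \big[Num.max/0]_i enorm (c - v i).
  by apply: eq_bigr => i _; apply: dist_nearest; case: (v_nearest i).
have umin t : \big[Num.max/0]_i enorm (c - v i) <= \big[Num.max/0]_i enorm (c - v i - t).
  rewrite -max_distE (le_trans (cmin (c - t))) //.
  apply: bigmax_le => [|i _]; first exact: bigmax_ge_id.
  rewrite (le_trans (dist_le _ (v_nearest i).1)) // addrAC.
  exact: (le_bigmax _ (fun i => enorm (c - v i - t))).
have [lam [lam_ge0 lam_sum1 lam_active lam_balanced]] := minmax_multipliers n_gt0 umin.
have [q [pq val]] := exists_saddle_of_multipliers Omega_convex (fun i => (v_nearest i).1)
  (fun i => (v_nearest i).2) lam_ge0 lam_sum1 lam_active lam_balanced.
by exists (c, v), q; rewrite val rstarE max_distE.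
Qed.

Unset Implicit Arguments. Set Strict Implicit. Set Printing Implicit Defensive.

Theorem theorem1 (R : realType) (d n : nat) (Omega : 'I_n -> set 'rV[R]_d) :
  (1 <= n)%N -> (1 <= d)%N ->
  (forall i, Omega i !=set0) ->
  (forall i, compact (Omega i)) ->
  (forall i, convex.convex_set (Omega i : set (convex_lmodType 'rV[R]_d))) ->
  (exists p q, nash_eq (gameX Omega `*` gameV Omega) (@gameY R d n)
                 (@payoff R d n) p q) /\
  (forall p q, nash_eq (gameX Omega `*` gameV Omega) (@gameY R d n)
                 (@payoff R d n) p q ->
     [/\ payoff p q = rstar Omega,
         (forall i, cball p.1 (rstar Omega) `&` Omega i !=set0)
       & (forall i, (cball p.1 (rstar Omega) `&` Omega i) (p.2 i))]).
Proof.
move=> n_gt0 _ Omega0 Omega_compact Omega_convex.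
have [p0 [q0 [pq0 val0]]] := exists_saddle_point n_gt0 Omega0 Omega_compact Omega_convex.
split; first by exists p0, q0.
move=> [x v] q pq; have val : payoff (x, v) q = rstar Omega.
  by rewrite (nash_eq_value pq pq0) val0.
have v_in_ball i : (cball x (rstar Omega) `&` Omega i) (v i).
  case: pq => [[_ Vv] _ _ qmax]; split; last exact: Vv.
  rewrite /cball /= enormB -val.
  by have [q' Yq' <-] := payoff_point_mass x v i; exact: qmax.
by split=> // i; exists (v i).
Qed.
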